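(* Let $v\ge1$, $n\ge1$, $\epsilon>0$. Let $(Q,\hat P_n)$ and $(Q',\hat P_n')$ be RPBD schemes with parameters $(v,b,r,\lambda,\epsilon)$ and $(v,b',r',\lambda',\epsilon)$, respectively. Then the two schemes are marginally equivalent if and only if there exists a constant $t>0$ such that $(b',r',\lambda')=t(b,r,\lambda)$.
   Context: $\mathcal{X}=\{1,\dots,v\}$, $\Delta_v$ the probability vectors on $\mathcal{X}$. For $\mathcal{I}\subset\mathcal{X}\times\mathcal{Y}$, $\mathcal{I}_x=\{y:(x,y)\in\mathcal{I}\}$. For integers $v>0$, $b>r>\lambda\ge0$, a $(v,b,r,\lambda)$-RPBD is an incidence structure $(\mathcal{X},\mathcal{Y},\mathcal{I})$ with $\mathcal{Y}$ finite nonempty, $|\mathcal{Y}|=b$, $|\mathcal{I}_x|=r$ for all $x$, $|\mathcal{I}_x\cap\mathcal{I}_{x'}|=\lambda$ for all $x\neq x'$. An RPBD scheme with parameters $(v,b,r,\lambda,\epsilon)$ consists of such an RPBD, the mechanism $Q(y|x)=\alpha e^\epsilon$ if $(x,y)\in\mathcal{I}$ and $\alpha$ otherwise, $\alpha=1/(re^\epsilon+b-r)$, and the estimator $\hat P_{n,x}(Y_1,\dots,Y_n)=\frac{1}{(r-\lambda)(e^\epsilon-1)}\left(\frac{N_x}{n\alpha}-(\lambda e^\epsilon+r-\lambda)\right)$, $N_x=\sum_{i=1}^n\mathbb{1}(Y_i\in\mathcal{I}_x)$. Two schemes are marginally equivalent if, with $X_1,\dots,X_n$ i.i.d. $\sim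 P$, $Y_i\sim Q(\cdot|X_i)$, $Y_i'\sim Q'(\cdot|X_i)$, one has $\hat P_{n,x}(Y_1,\dots,Y_n)\overset{d}{=}\hat P'_{n,x}(Y_1',\dots,Y_n')$ for all $x\in\mathcal{X}$ and $P\in\Delta_v$. *)

From mathcomp Require Import all_boot all_order all_algebra.
From mathcomp Require Import all_classical all_reals.
From mathcomp Require Import sequences exp.
Set Implicit Arguments. Unset Strict Implicit. Unset Printing Implicit Defensive.
Import Order.TTheory GRing.Theory Num.Theory.
Local Open Scope ring_scope.

(* X = {1..v} is represented by 'I_v. *)

Definition Isec (v : nat) (Y : finType) (I : {set 'I_v * Y}) (x : 'I_v) : {set Y} :=
  [set y | (x, y) \in I].

Definition is_RPBD (v b r l : nat) (Y : finType) (I : {set 'I_v * Y}) : Prop :=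
  [/\ [/\ (0 < v)%N, (l < r)%N & (r < b)%N], #|Y| = b,
      (forall x : 'I_v, #|Isec I x| = r) &
      (forall x x' : 'I_v, x != x' -> #|Isec I x :&: Isec I x'| = l)].


Definition rpbd_alpha (R : realType) (b r : nat) (eps : R) : R :=
  1 / (r%:R * expR eps + b%:R - r%:R).

Definition rpbd_Q (R : realType) (v b r : nat) (eps : R) (Y : finType) (I : {set 'I_v * Y})
  (x : 'I_v) (y : Y) : R :=
  if (x, y) \in I then @rpbd_alpha R b r eps * expR eps else @rpbd_alpha R b r eps.

Definition rpbd_N (v n : nat) (Y : finType) (I : {set 'I_v * Y})
  (x : 'I_v) (ys : {ffun 'I_n -> Y}) : nat :=
  #|[set i : 'I_n | ys i \in Isec I x]|.

Definition rpbd_est (R : realType) (v n b r l : nat) (eps : R) (Y : finType) (I : {set 'I_v * Y})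
  (x : 'I_v) (ys : {ffun 'I_n -> Y}) : R :=
  1 / ((r%:R - l%:R) * (expR eps - 1)) *
  ((@rpbd_N v n Y I x ys)%:R / (n%:R * @rpbd_alpha R b r eps)
   - (l%:R * expR eps + r%:R - l%:R)).

Definition prob_vec (R : realType) (v : nat) (P : {ffun 'I_v -> R}) : Prop :=
  (forall x, 0 <= P x) /\ \sum_(x : 'I_v) P x = 1.

(* Law of the (finitely supported) random variable \hat P_{n,x}(Y_1..Y_n),
   where X_1..X_n iid ~ P and Y_i ~ Q(.|X_i): mass at each real z. *)
Definition est_law (R : realType) (v n b r l : nat) (eps : R) (Y : finType) (I : {set 'I_v * Y})
  (P : {ffun 'I_v -> R}) (x : 'I_v) (z : R) : R :=
  \sum_(xs : {ffun 'I_n -> 'I_v}) \sum_(ys : {ffun 'I_n -> Y})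
     (\prod_(i < n) (P (xs i) * @rpbd_Q R v b r eps Y I (xs i) (ys i))) *
     (@rpbd_est R v n b r l eps Y I x ys == z)%:R.

Definition marg_equiv (R : realType) (v n : nat) (eps : R)
  (Y : finType) (I : {set 'I_v * Y}) (b r l : nat)
  (Y' : finType) (I' : {set 'I_v * Y'}) (b' r' l' : nat) : Prop :=
  forall (P : {ffun 'I_v -> R}), @prob_vec R v P ->
  forall (x : 'I_v) (z : R),
    @est_law R v n b r l eps Y I P x z = @est_law R v n b' r' l' eps Y' I' P x z.

(* For a fixed x the n reports fall into I_x independently, each with
   probability p = sum_x' P(x') alpha (m e^eps + r - m), where m = r if x' = x
   and m = lambda otherwise.  Hence N_x is Binomial(n, p) and the estimator is
   phi(N_x) for a strictly increasing affine map phi.  Both p and phi are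
   unchanged when (b, r, lambda) is scaled, which gives sufficiency.
   Conversely, let P be a point mass at x: the least atom of the law is phi(0),
   of mass (1 - p)^n, so equal laws force equal phi(0), which determines
   lambda / r, and equal p = r e^eps / (r e^eps + b - r), which determines
   b / r. *)

From mathcomp Require Import all_boot all_order all_algebra.
From mathcomp Require Import all_classical all_reals.
From mathcomp Require Import sequences exp.
From mathcomp Require Import ring lra.
Set Implicit Arguments. Unset Strict Implicit.
Import Order.TTheory GRing.Theory Num.Theory.
Local Open Scope ring_scope.

Section FfunSums.
Variable R : comRingType.

Lemma sum_ffun_mixture (I X Y : finType) (P : X -> R) (Q : X -> Y -> R)
    (h : {ffun I -> Y} -> R) :
  \sum_(xs : {ffun I -> X}) \sum_(ys : {ffun I -> Y})
     (\prod_i (P (xs i) * Q (xs i) (ys i))) * h ys =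
  \sum_(ys : {ffun I -> Y}) (\prod_i \sum_x P x * Q x (ys i)) * h ys.
Proof.
rewrite exchange_big; apply: eq_bigr => ys _.
by rewrite -mulr_suml bigA_distr_bigA.
Qed.

Lemma sum_ffun_push (I Y T : finType) (W : Y -> R) (f : Y -> T)
    (h : {ffun I -> T} -> R) :
  \sum_(ys : {ffun I -> Y}) (\prod_i W (ys i)) * h [ffun i => f (ys i)] =
  \sum_(ts : {ffun I -> T}) (\prod_i \sum_(y | f y == ts i) W y) * h ts.
Proof.
rewrite (partition_big (fun ys : {ffun I -> Y} => [ffun i => f (ys i)]) predT) //=.
apply: eq_bigr => ts _; rewrite bigA_distr_big_dep mulr_suml.
apply: eq_big => [ys | ys /eqP <- //].
apply/eqP/familyP => [<- i | fys]; first by rewrite unfold_in ffunE.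
by apply/ffunP => i; rewrite ffunE; apply/eqP/fys.
Qed.

End FfunSums.

Section BinomialLaw.
Variables (R : realDomainType) (n : nat).

Definition binom_law (p : R) (g : nat -> R) (z : R) : R :=
  \sum_(bs : {ffun 'I_n -> bool})
     (\prod_i (if bs i then p else 1 - p)) * (g #|[set i | bs i]| == z)%:R.

Lemma binom_law_support p g z : binom_law p g z != 0 -> exists k, z = g k.
Proof.
apply: contraNP => gz; apply/eqP/big1 => bs _.
by case: eqP => [gbs | _]; [case: gz; exists #|[set i | bs i]| | rewrite mulr0].
Qed.

Lemma binom_law_min p g : (forall k, (0 < k)%N -> g 0%N < g k) ->
  binom_law p g (g 0%N) = (1 - p) ^+ n.
Proof.
move=> g0_min; rewrite /binom_law (bigD1 [ffun=> false]) //= [X in _ + X]big1 ?addr0.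
  rewrite (eq_bigr (fun=> 1 - p)) => [|i _]; last by rewrite ffunE.
  rewrite prodr_const card_ord (_ : #|_| = 0%N) ?eqxx ?mulr1 //.
  by apply/eqP; rewrite cards_eq0; apply/eqP/setP => i; rewrite !inE ffunE.
move=> bs bs_ne0; rewrite gt_eqF ?mulr0 // g0_min // card_gt0.
apply: contra bs_ne0 => /eqP/setP bs0; apply/eqP/ffunP => i.
by move: (bs0 i); rewrite !inE ffunE => ->.
Qed.

Lemma binom_law_inj p p' g g' : (0 < n)%N -> p < 1 -> p' < 1 ->
  (forall k, (0 < k)%N -> g 0%N < g k) ->
  (forall k, (0 < k)%N -> g' 0%N < g' k) ->
  (forall z, binom_law p g z = binom_law p' g' z) ->
  g 0%N = g' 0%N /\ p = p'.
Proof.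
move=> n_gt0 p_lt1 p'_lt1 g_min g'_min same_law.
have le_min (h : nat -> R) k : (forall k, (0 < k)%N -> h 0%N < h k) -> h 0%N <= h k.
  by case: k => [|k] h_min //; rewrite ltW ?h_min.
have atom_ne0 (q : R) : q < 1 -> (1 - q) ^+ n != 0.
  by move=> q_lt1; rewrite expf_neq0 // gt_eqF ?subr_gt0.
have le_g'g : g' 0%N <= g 0%N.
  have := atom_ne0 p p_lt1; rewrite -(binom_law_min p g_min) same_law.
  by case/binom_law_support => k ->; apply: le_min.
have le_gg' : g 0%N <= g' 0%N.
  have := atom_ne0 p' p'_lt1; rewrite -(binom_law_min p' g'_min) -same_law.
  by case/binom_law_support => k ->; apply: le_min.
have g0E : g 0%N = g' 0%N by apply/eqP; rewrite eq_le le_gg' le_g'g.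
split=> //; apply/oppr_inj/(addrI 1)/eqP.
rewrite -(eqrXn2 n_gt0) ?subr_ge0 ?ltW //.
by rewrite -(binom_law_min p g_min) -(binom_law_min p' g'_min) -g0E same_law.
Qed.

End BinomialLaw.

Section CountEstimator.
Variables (R : realType) (n b r l : nat) (eps : R).

Definition rpbd_count_est (k : nat) : R :=
  1 / ((r%:R - l%:R) * (expR eps - 1)) *
  (k%:R / (n%:R * rpbd_alpha b r eps) - (l%:R * expR eps + r%:R - l%:R)).

Hypothesis r_lt_b : (r < b)%N.

Lemma rpbd_denom_gt0 : 0 < r%:R * expR eps + b%:R - r%:R.
Proof.
have : (r%:R : R) < b%:R by rewrite ltr_nat.
have := expR_gt0 eps; have : (0 : R) <= r%:R by [].
nra.
Qed.

Lemma rpbd_alpha_gt0 : 0 < rpbd_alpha b r eps.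
Proof. by rewrite /rpbd_alpha mul1r invr_gt0 rpbd_denom_gt0. Qed.

Lemma rpbd_alpha_diag_lt1 : rpbd_alpha b r eps * (r%:R * expR eps) < 1.
Proof.
rewrite /rpbd_alpha mul1r mulrC ltr_pdivrMr ?rpbd_denom_gt0 // mul1r.
by rewrite -addrA ltrDl subr_gt0 ltr_nat.
Qed.

Lemma rpbd_count_est0_lt (k : nat) : (0 < n)%N -> 0 < eps -> (l < r)%N -> (0 < k)%N ->
  rpbd_count_est 0 < rpbd_count_est k.
Proof.
move=> n_gt0 eps_gt0 l_lt_r k_gt0.
rewrite /rpbd_count_est ltr_pM2l; last first.
  by rewrite mul1r invr_gt0 mulr_gt0 // subr_gt0 ?ltr_nat ?expR_gt1.
by rewrite ltrD2r ltr_pM2r ?ltr_nat // invr_gt0 mulr_gt0 ?ltr0n ?rpbd_alpha_gt0.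
Qed.

End CountEstimator.

Section PointMass.
Variables (R : realType) (v : nat) (x0 : 'I_v).

Definition point_mass : {ffun 'I_v -> R} := [ffun x => (x == x0)%:R].

Lemma sum_point_mass (F : 'I_v -> R) : \sum_x point_mass x * F x = F x0.
Proof.
rewrite (bigD1 x0) //= ffunE eqxx mul1r big1 ?addr0 // => x /negbTE x_neq.
by rewrite ffunE x_neq mul0r.
Qed.

Lemma point_mass_prob : prob_vec point_mass.
Proof.
split=> [x | ]; first by rewrite ffunE ler0n.
by rewrite -[RHS](sum_point_mass (fun=> 1)); apply: eq_bigr => x _; rewrite mulr1.
Qed.

End PointMass.

Section RPBDScheme.
Variables (R : realType) (v n b r l : nat) (eps : R).
Variables (Y : finType) (I : {set 'I_v * Y}).
Hypothesis rpbd : is_RPBD b r l I.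

Definition rpbd_hit (x x' : 'I_v) : R := \sum_(y in Isec I x) rpbd_Q b r eps I x' y.

Lemma rpbd_estE x (ys : {ffun 'I_n -> Y}) :
  rpbd_est b r l eps I x ys = rpbd_count_est n b r l eps #|[set i | ys i \in Isec I x]|.
Proof. by []. Qed.

Lemma sum_rpbd_Q (A : {set Y}) x :
  \sum_(y in A) rpbd_Q b r eps I x y =
  rpbd_alpha b r eps * (#|A :&: Isec I x|%:R * expR eps + #|A :\: Isec I x|%:R).
Proof.
rewrite (big_setID (Isec I x)) mulrDr; congr (_ + _).
- rewrite (eq_bigr (fun=> rpbd_alpha b r eps * expR eps)) => [|y].
    by rewrite sumr_const mulrCA mulr_natl.
  by rewrite /rpbd_Q !inE => /andP[_ ->].
- rewrite (eq_bigr (fun=> rpbd_alpha b r eps)) => [|y].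
    by rewrite sumr_const mulr_natr.
  by rewrite /rpbd_Q !inE => /andP[/negbTE ->].
Qed.

Lemma sum_rpbd_Q_all x : \sum_y rpbd_Q b r eps I x y = 1.
Proof.
have [[_ _ r_lt_b] card_Y card_I _] := rpbd.
have card_C : #|~: Isec I x| = (b - r)%N.
  by rewrite -card_Y -(card_I x) -(cardsC (Isec I x)) addKn.
rewrite (eq_bigl (fun y => y \in [set: Y]%SET)) => [|y]; last by rewrite inE.
rewrite sum_rpbd_Q finset.setTI finset.setTD card_I card_C natrB 1?ltnW // addrA.
by rewrite /rpbd_alpha mul1r mulVf // gt_eqF // rpbd_denom_gt0.
Qed.

Lemma rpbd_hitE x x' :
  rpbd_hit x x' = rpbd_alpha b r eps *
    ((if x' == x then r else l)%:R * expR eps + r%:R - (if x' == x then r else l)%:R).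
Proof.
have [[_ l_lt_r _] _ card_I card_II] := rpbd.
rewrite /rpbd_hit sum_rpbd_Q cardsD.
have [<- | x'_ne_x] := eqVneq x' x.
  by rewrite finset.setIid card_I subnn addr0 addrK.
by rewrite card_II 1?eq_sym // card_I natrB 1?ltnW // addrA.
Qed.

Lemma est_law_binom (P : {ffun 'I_v -> R}) x z : \sum_x' P x' = 1 ->
  est_law n b r l eps I P x z =
  binom_law n (\sum_x' P x' * rpbd_hit x x') (rpbd_count_est n b r l eps) z.
Proof.
move=> sum_P; pose W y := \sum_x' P x' * rpbd_Q b r eps I x' y.
have W_in : \sum_(y in Isec I x) W y = \sum_x' P x' * rpbd_hit x x'.
  by rewrite exchange_big; apply: eq_bigr => x' _; rewrite mulr_sumr.
have W_all : \sum_y W y = 1.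
  rewrite exchange_big -[RHS]sum_P; apply: eq_bigr => x' _.
  by rewrite -mulr_sumr sum_rpbd_Q_all mulr1.
rewrite /est_law sum_ffun_mixture.
under eq_bigr => ys _.
  rewrite rpbd_estE (_ : #|_| = #|[set i | [ffun i => ys i \in Isec I x] i]|).
    over.
  by apply: eq_card => i; rewrite !inE ffunE inE.
rewrite (sum_ffun_push W (fun y => y \in Isec I x)
  (fun bs => (rpbd_count_est n b r l eps #|[set i | bs i]| == z)%:R)).
apply: eq_bigr => bs _; congr (_ * _); apply: eq_bigr => i _.
case: (bs i); rewrite -W_in; first by apply: eq_bigl => y; rewrite eqb_id.
rewrite -W_all [X in X - _](bigID (mem (Isec I x))) /= addrC addrK.
by apply: eq_bigl => y; rewrite eqbF_neg.
Qed.

Lemma est_law_point_mass x z :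
  est_law n b r l eps I (point_mass R x) x z =
  binom_law n (rpbd_alpha b r eps * (r%:R * expR eps)) (rpbd_count_est n b r l eps) z.
Proof.
have [_ sum_P] := point_mass_prob R x.
by rewrite est_law_binom // sum_point_mass rpbd_hitE eqxx addrK.
Qed.

End RPBDScheme.

Section Rescaling.
Variables (R : realType) (b r l b' r' l' : nat) (eps t : R).
Hypotheses (b'E : b'%:R = t * b%:R) (r'E : r'%:R = t * r%:R) (l'E : l'%:R = t * l%:R).

Lemma rpbd_alpha_scale : rpbd_alpha b' r' eps = rpbd_alpha b r eps / t.
Proof.
rewrite /rpbd_alpha b'E r'E !mul1r -invfM mulrC; congr _^-1; ring.
Qed.

Lemma rpbd_hit_scale v (Y Y' : finType) (I : {set 'I_v * Y}) (I' : {set 'I_v * Y'}) x x' :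
  t != 0 -> is_RPBD b r l I -> is_RPBD b' r' l' I' ->
  rpbd_hit b' r' eps I' x x' = rpbd_hit b r eps I x x'.
Proof.
move=> t_neq0 rpbd rpbd'.
rewrite (rpbd_hitE _ rpbd) (rpbd_hitE _ rpbd') rpbd_alpha_scale.
by case: eqP => _; rewrite r'E ?l'E; field.
Qed.

Lemma rpbd_count_est_scale n k : t != 0 ->
  rpbd_count_est n b' r' l' eps k = rpbd_count_est n b r l eps k.
Proof.
move=> t_neq0; rewrite /rpbd_count_est rpbd_alpha_scale r'E l'E.
have -> : t * l%:R * expR eps + t * r%:R - t * l%:R =
          t * (l%:R * expR eps + r%:R - l%:R) by ring.
rewrite -mulrBr mulrA invf_div mulrCA -mulrBr !mul1r -mulrA invfM.
by rewrite mulrACA mulVf // mul1r.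
Qed.

End Rescaling.

Section Identification.
Variables (R : realType) (n b r l b' r' l' : nat) (eps : R).

Lemma rpbd_cross_rb : (r < b)%N -> (r' < b')%N ->
  rpbd_alpha b r eps * (r%:R * expR eps) = rpbd_alpha b' r' eps * (r'%:R * expR eps) ->
  r%:R * b'%:R = r'%:R * b%:R :> R.
Proof.
move=> r_lt_b r'_lt_b'; rewrite /rpbd_alpha !mul1r mulrC [RHS]mulrC => /eqP.
rewrite eqr_div ?(gt_eqF (rpbd_denom_gt0 eps _)) // => /eqP cross.
have : expR eps * (r%:R * b'%:R - r'%:R * b%:R) = 0.
  transitivity (r%:R * expR eps * (r'%:R * expR eps + b'%:R - r'%:R) -
                r'%:R * expR eps * (r%:R * expR eps + b%:R - r%:R)); first by ring.
  by rewrite cross subrr.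
by move/eqP; rewrite mulf_eq0 gt_eqF ?expR_gt0 //= subr_eq0 => /eqP.
Qed.

Lemma rpbd_cross_rl : 0 < eps -> (l < r)%N -> (l' < r')%N ->
  rpbd_count_est n b r l eps 0 = rpbd_count_est n b' r' l' eps 0 ->
  r%:R * l'%:R = r'%:R * l%:R :> R.
Proof.
move=> eps_gt0 l_lt_r l'_lt_r'.
have denom_gt0 k m : (k < m)%N -> 0 < (m%:R - k%:R) * (expR eps - 1) :> R.
  by move=> k_lt_m; rewrite mulr_gt0 // subr_gt0 ?ltr_nat ?expR_gt1.
rewrite /rpbd_count_est !mul0r !sub0r !mul1r mulrC [RHS]mulrC => /eqP.
rewrite eqr_div ?(gt_eqF (denom_gt0 _ _ _)) // => /eqP cross.
have : (expR eps - 1) * expR eps * (r%:R * l'%:R - r'%:R * l%:R) = 0.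
  transitivity (- (l%:R * expR eps + r%:R - l%:R) * ((r'%:R - l'%:R) * (expR eps - 1)) -
                - (l'%:R * expR eps + r'%:R - l'%:R) * ((r%:R - l%:R) * (expR eps - 1)));
    first by ring.
  by rewrite cross subrr.
move/eqP; rewrite !mulf_eq0 gt_eqF ?subr_gt0 ?expR_gt1 // gt_eqF ?expR_gt0 //=.
by rewrite subr_eq0 => /eqP.
Qed.

End Identification.

Lemma scale_of_cross (R : realFieldType) (b r l b' r' l' : R) :
  0 < r -> 0 < r' -> r * b' = r' * b -> r * l' = r' * l ->
  exists t, 0 < t /\ [/\ b' = t * b, r' = t * r & l' = t * l].
Proof.
move=> r_gt0 r'_gt0 rb rl; have r_neq0 : r != 0 by rewrite gt_eqF.
exists (r' / r); split; first by rewrite divr_gt0.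
by split; rewrite ?divfK // mulrAC -?rb -?rl mulrAC divff ?mul1r.
Qed.

Unset Implicit Arguments.

Theorem theorem7 (R : realType) (v n b r l b' r' l' : nat) (eps : R)
  (Y Y' : finType) (I : {set 'I_v * Y}) (I' : {set 'I_v * Y'}) :
  (1 <= v)%N -> (1 <= n)%N -> 0 < eps ->
  @is_RPBD v b r l Y I -> @is_RPBD v b' r' l' Y' I' ->
  (@marg_equiv R v n eps Y I b r l Y' I' b' r' l' <->
   exists t : R, 0 < t /\
     [/\ (b'%:R : R) = t * b%:R, (r'%:R : R) = t * r%:R & (l'%:R : R) = t * l%:R]).
Proof.
move=> v_gt0 n_gt0 eps_gt0 rpbd rpbd'.
have [[_ l_lt_r r_lt_b] _ _ _] := rpbd; have [[_ l'_lt_r' r'_lt_b'] _ _ _] := rpbd'.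
split=> [equiv | [t [t_gt0 [b'E r'E l'E]]] P [_ sum_P] x z]; last first.
  have t_neq0 : t != 0 by rewrite gt_eqF.
  rewrite !est_law_binom //.
  congr binom_law; last by apply: funext => k; rewrite (rpbd_count_est_scale _ b'E r'E l'E).
  by apply: eq_bigr => x' _; rewrite (rpbd_hit_scale _ b'E r'E l'E _ _ t_neq0 rpbd rpbd').
pose x0 : 'I_v := Ordinal v_gt0.
have same_law z :
    binom_law n (rpbd_alpha b r eps * (r%:R * expR eps)) (rpbd_count_est n b r l eps) z =
    binom_law n (rpbd_alpha b' r' eps * (r'%:R * expR eps)) (rpbd_count_est n b' r' l' eps) z.
  rewrite -(est_law_point_mass n eps rpbd x0) -(est_law_point_mass n eps rpbd' x0).
  exact: equiv (point_mass_prob R x0) x0 z.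
have [est0E hitE] := binom_law_inj n_gt0
  (rpbd_alpha_diag_lt1 eps r_lt_b) (rpbd_alpha_diag_lt1 eps r'_lt_b')
  (fun k => rpbd_count_est0_lt r_lt_b n_gt0 eps_gt0 l_lt_r)
  (fun k => rpbd_count_est0_lt r'_lt_b' n_gt0 eps_gt0 l'_lt_r')
  same_law.
apply: scale_of_cross (rpbd_cross_rb r_lt_b r'_lt_b' hitE)
  (rpbd_cross_rl eps_gt0 l_lt_r l'_lt_r' est0E).
  by rewrite ltr0n (leq_ltn_trans _ l_lt_r).
by rewrite ltr0n (leq_ltn_trans _ l'_lt_r').
Qed.
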